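(* Let $b\ge0$. Consider an instance with $m$ machines and $n$ jobs, an assignment $\{J_i\}_{i=1}^m$, and integers $\ell_1,\dots,\ell_m\in[m]$ such that for every $\ell\in[m]$ at most $\ell$ machines $i$ have $\ell_i\le\ell$. Suppose $$\sum_{i=1}^m\sum_{j\in J_i}\mathbb{E}[X''_{ij}]\le2\qquad\text{and}\qquad\sum_{j\in J_i}\beta_{\ell_i}(X'_{ij})\le b+1\ \ \text{for all } i\in[m].$$ Then the expected makespan $\mathbb{E}\big[\max_{i}\sum_{j\in J_i}X_{ij}\big]$ is at most $4b+10$.
   Context: Nonnegative random variables $X_{ij}$ (size of job $j$ on machine $i$), with $X_{ij}$ and $X_{i'j'}$ independent whenever $j\ne j'$. $X'_{ij}:=X_{ij}\mathbf{1}[X_{ij}\le1]$, $X''_{ij}:=X_{ij}\mathbf{1}[X_{ij}>1]$. Effective size: $\beta_k(X):=\frac{1}{\ln k}\ln\mathbb{E}[e^{(\ln k)X}]$ for integers $k\ge2$, $\beta_1(X):=\mathbb{E}[X]$. *)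

From HB Require Import structures.
From mathcomp Require Import all_boot all_order all_algebra.
From mathcomp Require Import all_classical all_reals all_analysis.
Set Implicit Arguments. Unset Strict Implicit. Unset Printing Implicit Defensive.
Import Order.TTheory GRing.Theory Num.Theory.
Local Open Scope classical_set_scope.
Local Open Scope ring_scope.

Section defs.
Context {d : measure_display} {T : measurableType d} {R : realType}.

Definition truncL (f : T -> R) : T -> R := fun x => if f x <= 1 then f x else 0.
Definition truncH (f : T -> R) : T -> R := fun x => if 1 < f x then f x else 0.

Definition expect (P : probability T R) (f : T -> R) : \bar R :=
  (\int[P]_x (f x)%:E)%E.

(* effective size beta_k(Y) = ln E[exp((ln k) Y)] / ln k for k >= 2, E[Y] for k = 1.
   (Used only for bounded Y, where these expectations are finite reals.) *)
Definition beta (P : probability T R) (k : nat) (Y : T -> R) : R :=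
  if (2 <= k)%N then ln (fine (expect P (fun x => expR (ln k%:R * Y x)))) / ln k%:R
  else fine (expect P Y).

(* Mutual independence of the job size vectors (X_{ij})_{i} across jobs j:
   product rule for all measurable rectangles. *)
Definition jobs_independent (m n : nat) (P : probability T R)
  (X : 'I_m -> 'I_n -> T -> R) : Prop :=
  forall A : 'I_n -> 'I_m -> set R, (forall j i, measurable (A j i)) ->
    fine (P [set x | forall j i, A j i (X i j x)]) =
    \prod_(j < n) fine (P [set x | forall i, A j i (X i j x)]).

End defs.

From HB Require Import structures.
From mathcomp Require Import all_boot all_order all_algebra.
From mathcomp Require Import all_classical all_reals all_analysis.
From mathcomp Require Import measurable_realfun ring lra zify.
Import Order.TTheory GRing.Theory Num.Theory.
Local Open Scope classical_set_scope.
Local Open Scope ring_scope.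

(* Split every size into its light part [X' <= 1] and its heavy part [X''].
   Pointwise, the makespan is at most
     (light load of the machines with [ell i <= 1]) + (b + 5)
     + #{(i, t) | ell i >= 2, light load of i exceeds b + 5 + t}
     + (total heavy load).
   At most one machine has [ell i <= 1], so the first term has expectation at
   most [b + 1]; the heavy load has expectation at most 2 by hypothesis.  A
   Chernoff bound with base [ell i] gives
   P(light load of i > b + 5 + t) <= ell_i^-3 * 2^-t, and the counting
   hypothesis on [ell] makes [sum_i ell_i^-3 <= 1], so the count has
   expectation at most 2.  Altogether the expected makespan is at most 2b + 10.
   Independence is only assumed for measurable rectangles, so the Chernoff bound
   is run on light sizes rounded up to multiples of 1/(n+1): these take finitely
   many values, so products of functions of them factor in expectation, and the
   rounding costs at most 1 in the exponent. *)

Lemma measurable_fun_set {d} {T : measurableType d} (f : T -> bool) :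
  measurable_fun setT f -> measurable [set x | f x].
Proof. by move=> mf; have := mf measurableT [set true] I; rewrite setTI. Qed.

Lemma measurable_sum_pred {d} {T : measurableType d} {R : realType}
    (I : Type) (s : seq I) (Q : pred I) (h : I -> T -> R) :
  (forall i, measurable_fun setT (h i)) ->
  measurable_fun setT (fun x => \sum_(i <- s | Q i) h i x).
Proof.
move=> mh; under eq_fun do rewrite big_mkcond /=.
by apply: measurable_sum => i; case: (Q i) => //; exact: measurable_cst.
Qed.

Lemma measurable_bigmaxr {d} {T : measurableType d} {R : realType}
    (I : Type) (s : seq I) (F : I -> T -> R) :
  (forall i, measurable_fun setT (F i)) ->
  measurable_fun setT (fun x => \big[Num.max/0]_(i <- s) F i x).
Proof.
move=> mF; elim: s => [|i s ih].
  by under eq_fun do rewrite big_nil; exact: measurable_cst.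
under eq_fun do rewrite big_cons; exact: measurable_maxr.
Qed.

Section expectation.
Context {d : measure_display} {T : measurableType d} {R : realType}.
Variable P : probability T R.
Implicit Types (f g : T -> R) (A : set T).
Local Notation mfun f := (measurable_fun [set: T] f).

Lemma expect_ge0 f : (forall x, 0 <= f x) -> (0 <= expect P f)%E.
Proof. by move=> f0; apply: integral_ge0 => x _; rewrite lee_fin. Qed.

Lemma le_expect {f g} : mfun f -> mfun g -> (forall x, 0 <= f x) ->
  (forall x, f x <= g x) -> (expect P f <= expect P g)%E.
Proof.
move=> mf mg f0 fg; apply: ge0_le_integral => //.
- by move=> x _; rewrite lee_fin.
- exact/measurable_EFinP.
- exact/measurable_EFinP.
- by move=> x _; rewrite lee_fin.
Qed.

Lemma expect_cst (c : R) : expect P (fun=> c) = c%:E.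
Proof. by rewrite /expect integral_cst //= probability_setT mule1. Qed.

Lemma expect_sum (I : Type) (s : seq I) (Q : pred I) (h : I -> T -> R) :
  (forall i, mfun (h i)) -> (forall i x, 0 <= h i x) ->
  expect P (fun x => \sum_(i <- s | Q i) h i x) =
  (\sum_(i <- s | Q i) expect P (h i))%E.
Proof.
move=> mh h0; rewrite /expect big_mkcond /=.
under eq_integral do rewrite -sumEFin big_mkcond /=.
rewrite ge0_integral_sum //.
- by apply: eq_bigr => i _; case: (Q i) => //; rewrite integral0.
- by move=> i; case: (Q i); [exact/measurable_EFinP|exact: measurable_cst].
- by move=> i x _; case: (Q i); rewrite lee_fin.
Qed.

Lemma expectD f g : mfun f -> mfun g -> (forall x, 0 <= f x) ->
  (forall x, 0 <= g x) -> expect P (fun x => f x + g x) = (expect P f + expect P g)%E.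
Proof.
move=> mf mg f0 g0; rewrite /expect.
under eq_integral do rewrite EFinD.
apply: ge0_integralD => //.
- by move=> x _; rewrite lee_fin.
- exact/measurable_EFinP.
- by move=> x _; rewrite lee_fin.
- exact/measurable_EFinP.
Qed.

Lemma expectZl (c : R) f : 0 <= c -> mfun f -> (forall x, 0 <= f x) ->
  expect P (fun x => c * f x) = (c%:E * expect P f)%E.
Proof.
move=> c0 mf f0; rewrite /expect.
under eq_integral do rewrite EFinM.
apply: ge0_integralZl_EFin => //; first by move=> x _; rewrite lee_fin.
exact/measurable_EFinP.
Qed.

Lemma expect_indic A : measurable A -> expect P (\1_A) = P A.
Proof. by move=> mA; rewrite /expect integral_indic // setIT. Qed.

Lemma fin_num_probability A : measurable A -> P A \is a fin_num.
Proof.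
move=> mA; rewrite ge0_fin_numE //.
by apply: le_lt_trans (probability_le1 P mA) _; rewrite ltry.
Qed.

Lemma expect_bounded {f} {M : R} : mfun f -> (forall x, 0 <= f x) ->
  (forall x, f x <= M) -> expect P f = (fine (expect P f))%:E.
Proof.
move=> mf f0 fM; rewrite fineK // ge0_fin_numE; last exact: expect_ge0.
have := le_expect mf (measurable_cst M) f0 fM.
by rewrite expect_cst => /le_lt_trans; apply; rewrite ltry.
Qed.

End expectation.

Section finite_valued.
Context {d : measure_display} {T : measurableType d} {R : realType}.
Variable P : probability T R.

Lemma finite_valuedE {V : finType} (D : T -> V) (h : V -> R) :
  (fun x => h (D x)) = (fun x => \sum_v h v * \1_[set x | D x = v] x).
Proof.
apply/funext => x; rewrite (bigD1 (D x)) //= indicE mem_set // mulr1.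
rewrite big1 ?addr0 // => v vD; rewrite indicE memNset ?mulr0 //= => Dv.
by rewrite Dv eqxx in vD.
Qed.

Lemma measurable_finite_valued {V : finType} (D : T -> V) (h : V -> R) :
  (forall v, measurable [set x | D x = v]) ->
  measurable_fun setT (fun x => h (D x)).
Proof.
move=> mD; rewrite finite_valuedE; apply: measurable_sum => v.
by apply: measurable_funM; [exact: measurable_cst|exact: measurable_indic (mD v)].
Qed.

Lemma expect_finite_valued {V : finType} (D : T -> V) (h : V -> R) :
  (forall v, measurable [set x | D x = v]) -> (forall v, 0 <= h v) ->
  expect P (fun x => h (D x)) = (\sum_v h v * fine (P [set x | D x = v]))%:E.
Proof.
move=> mD h0; rewrite finite_valuedE expect_sum => [||v x]; last by rewrite mulr_ge0.
- rewrite -sumEFin; apply: eq_bigr => v _.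
  by rewrite expectZl // ?expect_indic // ?EFinM ?fineK ?fin_num_probability.
- by move=> v; apply: measurable_funM; [exact: measurable_cst|exact: measurable_indic (mD v)].
Qed.

Lemma finite_valued_fin_num {V : finType} (D : T -> V) (h : V -> R) :
  (forall v, measurable [set x | D x = v]) -> (forall v, 0 <= h v) ->
  expect P (fun x => h (D x)) \is a fin_num.
Proof. by move=> mD h0; rewrite expect_finite_valued. Qed.

Lemma expect_prod_independent (n : nat) (V : finType) (D : 'I_n -> T -> V)
    (g : 'I_n -> V -> R) :
  (forall j v, measurable [set x | D j x = v]) ->
  (forall z : {ffun 'I_n -> V}, fine (P [set x | forall j, D j x = z j]) =
     \prod_j fine (P [set x | D j x = z j])) ->
  (forall j v, 0 <= g j v) ->
  expect P (fun x => \prod_j g j (D j x)) =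
  (\prod_j fine (expect P (fun x => g j (D j x))))%:E.
Proof.
move=> mD indepD g0.
pose DD x : {ffun 'I_n -> V} := [ffun j => D j x].
have DDE z : [set x | DD x = z] = [set x | forall j, D j x = z j].
  apply/seteqP; split => x /=; first by move=> <- j; rewrite ffunE.
  by move=> Dz; apply/ffunP => j; rewrite ffunE.
have mDD z : measurable [set x | DD x = z].
  rewrite DDE (_ : [set x | _] = \bigcap_j [set x | D j x = z j]); last first.
    by apply/seteqP; split => x /= Dx j; [move=> _; exact: Dx|exact: Dx j I].
  by apply: fin_bigcap_measurable => //; exact: finite_setT.
have -> : (fun x => \prod_j g j (D j x)) = (fun x => \prod_j g j (DD x j)).
  by apply/funext => x; apply: eq_bigr => j _; rewrite ffunE.
rewrite (expect_finite_valued _ (fun z : {ffun _ -> _} => \prod_j g j (z j)) mDD); last first.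
  by move=> z; rewrite prodr_ge0.
congr EFin.
under [RHS]eq_bigr => j _ do rewrite (expect_finite_valued _ _ (mD j)) //=.
rewrite bigA_distr_bigA; apply: eq_bigr => z _.
by rewrite DDE indepD -big_split.
Qed.

End finite_valued.

Lemma measurable_truncn_eq {d} {T : measurableType d} {R : realType}
    (g : T -> R) (z : nat) :
  measurable_fun setT g -> measurable [set x | Num.truncn (g x) = z].
Proof.
move=> mg.
have mle k : measurable [set x | (Num.truncn (g x) <= k)%N].
  under eq_set do rewrite truncn_le_nat.
  by apply: measurable_fun_set; apply: measurable_fun_ltr => //; exact: measurable_cst.
case: z => [|z].
  rewrite (_ : [set x | _] = [set x | (Num.truncn (g x) <= 0)%N]); first exact: mle.
  by apply/seteqP; split => x /=; lia.
rewrite (_ : [set x | _] = [set x | (Num.truncn (g x) <= z.+1)%N] `\`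
                          [set x | (Num.truncn (g x) <= z)%N]).
  exact: measurableD.
by apply/seteqP; split => x /=; [move=> ->; rewrite ltnn|case=> h1 /negP; lia].
Qed.

Section discretization.
Context {R : realType} (N : nat).

Lemma bin_subproof (y : R) : (Num.truncn (N%:R * Num.min y 1%R) < N.+1)%N.
Proof.
rewrite ltnS truncn_le_nat; apply: (@le_lt_trans _ _ N%:R); last by rewrite ltr_nat.
by rewrite -[leRHS]mulr1 ler_wpM2l // ge_min lexx orbT.
Qed.

(* [bin y] is the grid cell of [y] at mesh [1/N]; clipping at [1] keeps it in
   range for every real [y]. *)
Definition bin (y : R) : 'I_N.+1 := Ordinal (bin_subproof y).

Lemma measurable_bin_eq {d} {T : measurableType d} (f : T -> R) (v : 'I_N.+1) :
  measurable_fun setT f -> measurable [set x | bin (f x) = v].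
Proof.
move=> mf; rewrite (_ : [set x | _] =
  [set x | Num.truncn (N%:R * Num.min (f x) 1%R) = val v]); last first.
  by apply/seteqP; split => x /=; [move=> <-|move=> h; apply: val_inj].
apply: measurable_truncn_eq; apply: measurable_funM; first exact: measurable_cst.
by apply: measurable_minr => //; exact: measurable_cst.
Qed.

Hypothesis N_gt0 : (0 < N)%N.

Lemma bin_roundup {y : R} : 0 <= y <= 1 ->
  y <= (bin y).+1%:R / N%:R <= y + N%:R^-1.
Proof.
case/andP=> y0 y1; have N0 : 0 < N%:R :> R by rewrite ltr0n.
have /andP[lo hi] := truncn_itv (mulr_ge0 (ler0n R N) y0).
rewrite /bin /= (min_l y1) ler_pdivlMr // mulrC (ltW hi) /=.
rewrite ler_pdivrMr // mulrDl mulVf ?gt_eqF // -natr1; lra.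
Qed.

End discretization.

Section truncation.
Context {d : measure_display} {T : measurableType d} {R : realType}.
Implicit Type f : T -> R.

Lemma truncL_le1 f x : truncL f x <= 1.
Proof. by rewrite /truncL; case: ifP. Qed.

Lemma truncL_ge0 {f x} : 0 <= f x -> 0 <= truncL f x.
Proof. by rewrite /truncL; case: ifP. Qed.

Lemma truncH_ge0 f x : 0 <= truncH f x.
Proof. by rewrite /truncH; case: ifPn => // /ltW; exact: le_trans. Qed.

Lemma truncLH f x : f x = truncL f x + truncH f x.
Proof. by rewrite /truncL /truncH; case: leP => _; rewrite ?addr0 ?add0r. Qed.

Lemma measurable_truncL {f} : measurable_fun setT f -> measurable_fun setT (truncL f).
Proof.
move=> mf; apply: (measurable_fun_ifT _ mf (measurable_cst _)).
by apply: measurable_fun_ler => //; exact: measurable_cst.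
Qed.

Lemma measurable_truncH {f} : measurable_fun setT f -> measurable_fun setT (truncH f).
Proof.
move=> mf; apply: (measurable_fun_ifT _ mf (measurable_cst _)).
by apply: measurable_fun_ltr => //; exact: measurable_cst.
Qed.

End truncation.

Lemma jobs_independent_row {d} {T : measurableType d} {R : realType}
    {P : probability T R} {m n : nat} {X : 'I_m -> 'I_n -> T -> R} (i : 'I_m)
    {V : finType} (phi : 'I_n -> R -> V) :
  jobs_independent P X -> (forall j v, measurable [set y | phi j y = v]) ->
  forall z : {ffun 'I_n -> V},
  fine (P [set x | forall j, phi j (X i j x) = z j]) =
  \prod_j fine (P [set x | phi j (X i j x) = z j]).
Proof.
move=> indepX mphi z.
pose A j i' := if i' == i then [set y | phi j y = z j] else setT.
have mA j i' : measurable (A j i') by rewrite /A; case: eqP.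
have Ai j i' y : A j i' y <-> (i' = i -> phi j y = z j).
  by rewrite /A; case: eqP => [->|ne]; split => // h; exact: h.
have rowE : [set x | forall j i', A j i' (X i' j x)] =
    [set x | forall j, phi j (X i j x) = z j].
  apply/seteqP; split => x /= h; first by move=> j; exact: (Ai j i _).1 (h j i) erefl.
  by move=> j i'; apply/Ai => ->.
have cellE j : [set x | forall i', A j i' (X i' j x)] = [set x | phi j (X i j x) = z j].
  apply/seteqP; split => x /= h; first exact: (Ai j i _).1 (h i) erefl.
  by move=> i'; apply/Ai => ->.
by rewrite -rowE indepX //; apply: eq_bigr => j _; rewrite cellE.
Qed.

Section chernoff.
Context {d : measure_display} {T : measurableType d} {R : realType}.
Context {P : probability T R} {m n : nat} {X : 'I_m -> 'I_n -> T -> R}.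
Hypothesis mX : forall i j, measurable_fun setT (X i j).
Hypothesis X_ge0 : forall i j x, 0 <= X i j x.
Hypothesis indepX : jobs_independent P X.
Context (i : 'I_m) {k : nat}.
Hypothesis k_ge2 : (2 <= k)%N.

Let Y j := truncL (X i j).
Let L : R := ln k%:R.

Let L_gt0 : 0 < L. Proof. by apply: ln_gt0; rewrite ltr1n. Qed.

Let Y_itv j x : 0 <= Y j x <= 1.
Proof. by rewrite truncL_ge0 ?truncL_le1. Qed.

Let mY j : measurable_fun setT (Y j).
Proof. exact: measurable_truncL. Qed.

Let mexpY j : measurable_fun setT (fun x => expR (L * Y j x)).
Proof.
by apply: measurableT_comp => //; apply: measurable_funM => //; exact: measurable_cst.
Qed.

Lemma expect_expR_truncL j :
  expect P (fun x => expR (L * Y j x)) = (expR (L * beta P k (Y j)))%:E.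
Proof.
have expY_le x : expR (L * Y j x) <= expR L.
  by rewrite ler_expR ler_piMr ?(ltW L_gt0) //; case/andP: (Y_itv j x).
have eE := expect_bounded P (mexpY j) (fun x => expR_ge0 _) expY_le.
have e_ge1 : 1 <= fine (expect P (fun x => expR (L * Y j x))).
  rewrite -lee_fin -eE -(expect_cst P).
  apply: le_expect (measurable_cst _) (mexpY j) (fun _ => ler01) _ => x.
  by rewrite -expR0 ler_expR mulr_ge0 ?(ltW L_gt0); case/andP: (Y_itv j x).
rewrite eE /beta k_ge2 -/L mulrC divfK ?gt_eqF // lnK // posrE.
exact: lt_le_trans e_ge1.
Qed.

Let N := n.+1.
Let N_gt0 : (0 < N)%N. Proof. by []. Qed.

Let code j x := bin N (Y j x).

Let mcode j v : measurable [set x | code j x = v].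
Proof. exact: measurable_bin_eq. Qed.

Let indep_code (z : {ffun 'I_n -> 'I_N.+1}) :
  fine (P [set x | forall j, code j x = z j]) =
  \prod_j fine (P [set x | code j x = z j]).
Proof.
apply: (jobs_independent_row i (fun j y => bin N (truncL id y)) indepX) => j v.
exact/measurable_bin_eq/measurable_truncL.
Qed.

Let expect_expR_bin_le j :
  (expect P (fun x => expR (L * ((code j x).+1%:R / N%:R)))
     <= (expR (L * (N%:R^-1 + beta P k (Y j))))%:E)%E.
Proof.
have expR_bin_le x :
    expR (L * ((code j x).+1%:R / N%:R)) <= expR (L * N%:R^-1) * expR (L * Y j x).
  rewrite -expRD ler_expR -mulrDr ler_wpM2l ?(ltW L_gt0) // addrC.
  by case/andP: (bin_roundup _ N_gt0 (Y_itv j x)).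
have mexpR_bin : measurable_fun setT (fun x => expR (L * ((code j x).+1%:R / N%:R))).
  exact: (measurable_finite_valued _ (fun v : 'I_N.+1 => expR (L * (v.+1%:R / N%:R)))).
apply: le_trans (le_expect P mexpR_bin (measurable_funM (measurable_cst _) (mexpY j))
  (fun x => expR_ge0 _) expR_bin_le) _.
by rewrite expectZl ?expect_expR_truncL // -EFinM -expRD mulrDr.
Qed.

Lemma chernoff_truncL {J : pred 'I_n} {B c : R} :
  \sum_(j < n | J j) beta P k (Y j) <= B ->
  (expect P (fun x => if c < \sum_(j < n | J j) Y j x then 1 else 0)%R
     <= (expR (L * (B + 1 - c)))%:E)%E.
Proof.
move=> sum_beta_le.
pose g j (v : 'I_N.+1) := expR (L * (if J j then v.+1%:R / N%:R else 0)).
pose ind x : R := if c < \sum_(j < n | J j) Y j x then 1 else 0.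
have mind : measurable_fun setT ind.
  apply: measurable_fun_ifT; [|exact: measurable_cst|exact: measurable_cst].
  apply: measurable_fun_ltr; first exact: measurable_cst.
  exact: measurable_sum_pred.
have ind_ge0 x : 0 <= ind x by rewrite /ind; case: ifP.
have g_ge0 j v : 0 <= g j v by exact: expR_ge0.
have mprodg : measurable_fun setT (fun x => \prod_j g j (code j x)).
  by apply: measurable_prod => j _; exact: measurable_finite_valued.
(* Markov's inequality for [exp (L * sum)], after rounding each [Y j] up to its bin. *)
have ind_le x : ind x <= expR (- (L * c)) * \prod_j g j (code j x).
  rewrite /ind /g -expR_sum -expRD; case: ifP => [cY|_]; last exact: expR_ge0.
  apply: le_trans (expR_ge1Dx _); rewrite lerDl -mulr_sumr -mulrN -mulrDr.
  rewrite mulr_ge0 ?(ltW L_gt0) // addrC subr_ge0; apply: le_trans (ltW cY) _.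
  rewrite big_mkcond; apply: ler_sum => j _; case: (J j) => //.
  by case/andP: (bin_roundup _ N_gt0 (Y_itv j x)).
have factor_le j : fine (expect P (fun x => g j (code j x))) <=
    expR (L * (if J j then N%:R^-1 + beta P k (Y j) else 0)).
  rewrite -lee_fin fineK ?finite_valued_fin_num // /g; case: (J j).
  - exact: expect_expR_bin_le.
  - by rewrite mulr0 expR0 expect_cst.
apply: le_trans (le_expect P mind (measurable_funM (measurable_cst _) mprodg) ind_ge0 ind_le) _.
rewrite expectZl ?expect_prod_independent //; last by move=> x; rewrite prodr_ge0.
rewrite -EFinM lee_fin.
apply: (@le_trans _ _ (expR (- (L * c)) *
    \prod_j expR (L * (if J j then N%:R^-1 + beta P k (Y j) else 0)))).
  rewrite ler_wpM2l ?expR_ge0 //; apply: ler_prod => j _.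
  by rewrite factor_le andbT fine_ge0 // expect_ge0.
rewrite -expR_sum -expRD ler_expR -mulr_sumr -mulrN -mulrDr ler_wpM2l ?(ltW L_gt0) //.
rewrite -big_mkcond big_split /= [leRHS]addrC lerD2l addrC lerD //.
rewrite sumr_const -(mulr_natl N%:R^-1) ler_pdivrMr ?ltr0n // mul1r ler_nat.
by rewrite leqW // (leq_trans (max_card _)) ?card_ord.
Qed.

End chernoff.

Section real_bounds.
Context {R : realType}.

Lemma expR_ln_le (K : R) (t : nat) : 2 <= K ->
  expR (ln K * - (t + 3)%:R) <= K^-1 ^+ 3 * 2^-1 ^+ t.
Proof.
move=> K_ge2; have K_gt0 : 0 < K by apply: lt_le_trans K_ge2.
rewrite mulrN expRN mulrC expRM_natl lnK ?posrE // -exprVn exprD mulrC.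
apply: ler_wpM2l; first by rewrite exprn_ge0 // invr_ge0 ltW.
by apply: lerXn2r; rewrite ?nnegrE ?invr_ge0 ?(ltW K_gt0) // lef_pV2 ?posrE.
Qed.

Lemma sum_geometric_half_le (a : R) (N : nat) : 0 <= a ->
  \sum_(0 <= t < N) a * 2^-1 ^+ t <= a * 2.
Proof.
move=> a0; have := @geometric_le_lim R N a 2^-1 a0.
rewrite seriesEnat /= => /(_ _ _)/le_trans; apply => //.
  by rewrite ger0_norm ?invf_lt1 ?ltr1n.
by rewrite (_ : 1 - 2^-1 = 2^-1 :> R) ?invrK //; field.
Qed.

Lemma le_add_count_gt {N : nat} {c y : R} : y <= c + N%:R ->
  y <= c + \sum_(0 <= t < N) (if c + t%:R < y then 1 else 0).
Proof.
elim: N c => [|N ih] c h; first by rewrite big_geq // addr0 -[c]addr0.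
rewrite big_ltn // big_add1 /= addr0.
under eq_bigr => t _ do rewrite -natr1 (addrC t%:R) addrA.
have := ih (c + 1); rewrite -addrA (addrC 1) natr1 => /(_ h).
have : 0 <= \sum_(0 <= t < N) (if c + 1 + t%:R < y then (1:R) else 0).
  by apply: sumr_ge0 => t _; case: ifP.
by case: ltP => /=; lra.
Qed.

End real_bounds.

Section inverse_cubes.
Context {R : realType}.

(* [l * tel l = 3 / (l + 1) - 3 / (l + 2)] telescopes, while [tel l] still
   dominates [l^-3] for [l >= 2]. *)
Let tel (l : nat) : R := 3 / (l%:R * (l%:R + 1) * (l%:R + 2)).

Let tel_ge0 l : 0 <= tel l.
Proof. by rewrite divr_ge0 // !mulr_ge0 // addr_ge0. Qed.

Let invX3_le_tel (l : nat) : (2 <= l)%N -> l%:R^-1 ^+ 3 <= tel l.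
Proof.
move=> l2; have x2 : 2 <= l%:R :> R by rewrite (ler_nat R 2).
rewrite /tel; move: (l%:R : R) x2 => x x2; have x0 : 0 < x by apply: lt_le_trans x2.
rewrite ler_pdivlMr ?mulr_gt0 ?addr_gt0 // exprVn mulrC.
rewrite ler_pdivrMr ?exprn_gt0 // -subr_ge0.
have -> : 3 * x ^+ 3 - x * (x + 1) * (x + 2) = x * ((2 * x + 1) * (x - 2)) by ring.
by rewrite mulr_ge0 ?(ltW x0) // mulr_ge0 ?subr_ge0 // addr_ge0 // mulr_ge0 // ltW.
Qed.

Let sum_mul_tel_le1 (M : nat) : \sum_(2 <= l < M) tel l * l%:R <= 1.
Proof.
have sumE K : \sum_(2 <= l < K.+2) tel l * l%:R = 1 - 3 / (K%:R + 3).
  elim: K => [|K ih]; first by rewrite big_geq // add0r divff ?subrr // pnatr_eq0.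
  rewrite big_nat_recr //= ih /tel; have K0 : 0 <= K%:R :> R := ler0n _ _.
  by field; apply/and3P; split; apply: lt0r_neq0; lra.
case: M => [|[|M]]; try by rewrite big_geq.
rewrite sumE lerBlDr lerDl divr_ge0 // addr_ge0.
Qed.

(* Bound [(ell i)^-3] by the tail sum of [tel] from [ell i] on, then exchange
   the sums: [tel l] is counted [#{i | ell i <= l} <= l] times. *)
Lemma sum_inv_cube_le1 (m : nat) (ell : 'I_m -> nat) :
  (forall i, (ell i <= m)%N) ->
  (forall l : nat, (1 <= l <= m)%N -> (#|[pred i | (ell i <= l)%N]| <= l)%N) ->
  \sum_(i < m | (2 <= ell i)%N) (ell i)%:R^-1 ^+ 3 <= 1 :> R.
Proof.
move=> ell_le ell_count.
apply: le_trans (ler_sum _ (fun i => invX3_le_tel (ell i))) _.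
apply: (@le_trans _ _ (\sum_(i < m | (2 <= ell i)%N)
    \sum_(2 <= l < m.+1) (if (ell i <= l)%N then tel l else 0))).
  apply: ler_sum => i ell2.
  rewrite (big_cat_nat _ (n := ell i)) //=; last by rewrite ltnW // ltnS.
  rewrite [X in _ + X]big_ltn ?ltnS // leqnn addrCA lerDl.
  by rewrite addr_ge0 // sumr_ge0 // => l _; case: ifP.
rewrite exchange_big /=; apply: le_trans (sum_mul_tel_le1 m.+1).
apply: ler_sum_nat => l /andP[l2 lm].
rewrite -big_mkcondr /=.
apply: (@le_trans _ _ (\sum_(i < m | (ell i <= l)%N) tel l)).
  rewrite [leRHS]big_mkcond [leLHS]big_mkcond; apply: ler_sum => i _.
  by case: (ell i <= l)%N; rewrite ?andbT ?andbF //; case: ifP.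
rewrite sumr_const -(mulr_natr (tel l)); apply: ler_wpM2l => //.
by rewrite ler_nat ell_count //; lia.
Qed.

End inverse_cubes.

Section makespan.
Context {d : measure_display} {T : measurableType d} {R : realType}.
Context {P : probability T R} {m n : nat} {X : 'I_m -> 'I_n -> T -> R}.
Context {a : 'I_n -> 'I_m} {ell : 'I_m -> nat} {b : R}.
Hypothesis b_ge0 : 0 <= b.
Hypothesis mX : forall i j, measurable_fun setT (X i j).
Hypothesis X_ge0 : forall i j x, 0 <= X i j x.
Hypothesis indepX : jobs_independent P X.
Hypothesis ell_le : forall i, (ell i <= m)%N.
Hypothesis ell_count :
  forall l : nat, (1 <= l <= m)%N -> (#|[pred i : 'I_m | (ell i <= l)%N]| <= l)%N.
Hypothesis sum_heavy_le2 :
  (\sum_(i < m) \sum_(j < n | a j == i) expect P (truncH (X i j)) <= 2%:E)%E.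
Hypothesis sum_beta_le :
  forall i, \sum_(j < n | a j == i) beta P (ell i) (truncL (X i j)) <= b + 1.

Let light i x := \sum_(j < n | a j == i) truncL (X i j) x.
Let heavy i x := \sum_(j < n | a j == i) truncH (X i j) x.
Let c0 := b + 5.
Let exceeds t i x : R := if c0 + t%:R < light i x then 1 else 0.
Let light_ell_le1 x := \sum_(i < m | (ell i <= 1)%N) light i x.
Let excess x := \sum_(0 <= t < n.+1) \sum_(i < m | (2 <= ell i)%N) exceeds t i x.
Let heavy_total x := \sum_(i < m) heavy i x.

Let mlight i : measurable_fun setT (light i).
Proof. by apply: measurable_sum_pred => j; exact: measurable_truncL. Qed.

Let light_ge0 i x : 0 <= light i x.
Proof. by apply: sumr_ge0 => j _; exact: truncL_ge0. Qed.

Let mheavy i : measurable_fun setT (heavy i).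
Proof. by apply: measurable_sum_pred => j; exact: measurable_truncH. Qed.

Let heavy_ge0 i x : 0 <= heavy i x.
Proof. by apply: sumr_ge0 => j _; exact: truncH_ge0. Qed.

Let mexceeds t i : measurable_fun setT (exceeds t i).
Proof.
apply: measurable_fun_ifT; [|exact: measurable_cst|exact: measurable_cst].
by apply: measurable_fun_ltr => //; exact: measurable_cst.
Qed.

Let exceeds_ge0 t i x : 0 <= exceeds t i x.
Proof. by rewrite /exceeds; case: ifP. Qed.

Let mlight_ell_le1 : measurable_fun setT light_ell_le1.
Proof. exact: measurable_sum_pred. Qed.

Let mexcess : measurable_fun setT excess.
Proof. by apply: measurable_sum_pred => t; exact: measurable_sum_pred. Qed.

Let mheavy_total : measurable_fun setT heavy_total.
Proof. exact: measurable_sum_pred. Qed.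

(* Machines with [ell i <= 1] are charged in full, the others only above the
   level [c0], where Chernoff's bound applies. *)
Lemma makespan_le x :
  \big[Num.max/0]_(i < m) \sum_(j < n | a j == i) X i j x <=
  light_ell_le1 x + (c0 + (excess x + heavy_total x)).
Proof.
have light_ell_le1_ge0 : 0 <= light_ell_le1 x by exact: sumr_ge0.
have excess_ge0 : 0 <= excess x by do 2!apply: sumr_ge0 => ? _.
have heavy_total_ge0 : 0 <= heavy_total x by exact: sumr_ge0.
have c0_ge0 : 0 <= c0 by rewrite addr_ge0.
apply: bigmax_le => [|i _]; first lra.
have -> : \sum_(j < n | a j == i) X i j x = light i x + heavy i x.
  by rewrite -big_split; apply: eq_bigr => j _; exact: truncLH.
have heavy_le : heavy i x <= heavy_total x.
  by rewrite /heavy_total (bigD1 i) //= lerDl sumr_ge0.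
suff : light i x <= light_ell_le1 x + (c0 + excess x) by lra.
have [ell1|ell2] := leqP (ell i) 1.
  suff : light i x <= light_ell_le1 x by lra.
  by rewrite /light_ell_le1 (bigD1 i) //= lerDl sumr_ge0.
have light_le_n : light i x <= c0 + n.+1%:R.
  apply: (@le_trans _ _ n%:R); last by rewrite -natr1; lra.
  rewrite -[n in n%:R]card_ord -sumr_const /light [leLHS]big_mkcond.
  by apply: ler_sum => j _; case: ifP => // _; exact: truncL_le1.
apply: le_trans (le_add_count_gt light_le_n) _.
rewrite [leRHS]addrCA lerD2l -[leLHS]add0r lerD // /excess.
by apply: ler_sum_nat => t _; rewrite (bigD1 i) //= lerDl sumr_ge0.
Qed.

Lemma expect_light_ell_le1 : (expect P light_ell_le1 <= (b + 1)%:E)%E.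
Proof.
have Elight i : (ell i <= 1)%N ->
    expect P (light i) = (\sum_(j < n | a j == i) beta P (ell i) (truncL (X i j)))%:E.
  move=> ell1; rewrite expect_sum => [|j|j x]; last exact: truncL_ge0.
  - rewrite -sumEFin; apply: eq_bigr => j _; rewrite /beta ifN -?leqNgt //.
    exact: (expect_bounded P (f := truncL (X i j)) (measurable_truncL (mX i j)))
      (fun x => truncL_ge0 (X_ge0 i j x)) (truncL_le1 _).
  - exact: measurable_truncL.
rewrite expect_sum // (eq_bigr _ Elight) sumEFin lee_fin; apply: le_trans (ler_sum _ (fun i _ => sum_beta_le i)) _.
rewrite sumr_const -[leRHS]mulr1 -mulr_natr; apply: ler_wpM2l; first exact: addr_ge0.
rewrite lern1; have [m0|m_gt0] := posnP m; first by rewrite (leq_trans (max_card _)) // card_ord m0.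
exact: ell_count.
Qed.

Lemma expect_excess : (expect P excess <= 2%:E)%E.
Proof.
have exceeds_le t i : (2 <= ell i)%N ->
    (expect P (exceeds t i) <= ((ell i)%:R^-1 ^+ 3 * 2^-1 ^+ t)%:E)%E.
  move=> ell2; apply: le_trans (chernoff_truncL mX X_ge0 indepX i ell2 (sum_beta_le i)) _.
  rewrite lee_fin (_ : b + 1 + 1 - (c0 + t%:R) = - (t + 3)%:R).
    by apply: expR_ln_le; rewrite (ler_nat R 2).
  by rewrite /c0 natrD; ring.
rewrite expect_sum => [||t x]; last exact: sumr_ge0; last first.
  by move=> t; exact: measurable_sum_pred.
apply: (@le_trans _ _ (\sum_(0 <= t < n.+1)
    (\sum_(i < m | (2 <= ell i)%N) (ell i)%:R^-1 ^+ 3 * 2^-1 ^+ t)%:E)%E).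
  apply: lee_sum => t _; rewrite expect_sum // -sumEFin.
  by apply: lee_sum => i; exact: exceeds_le.
rewrite sumEFin lee_fin exchange_big /=.
have inv3_ge0 i : 0 <= (ell i)%:R^-1 ^+ 3 :> R by rewrite exprn_ge0 // invr_ge0.
apply: le_trans (ler_sum _ (fun i _ => sum_geometric_half_le _ _ (inv3_ge0 i))) _.
by rewrite -mulr_suml ler_piMl ?sum_inv_cube_le1 ?sumr_ge0.
Qed.

Lemma expect_heavy_total : (expect P heavy_total <= 2%:E)%E.
Proof.
have Eheavy i : expect P (heavy i) = (\sum_(j < n | a j == i) expect P (truncH (X i j)))%E.
  rewrite expect_sum // => [j|j x]; [exact: measurable_truncH (mX i j)|exact: truncH_ge0].
by rewrite expect_sum //; under eq_bigr do rewrite Eheavy.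
Qed.

Lemma expect_makespan_le :
  (expect P (fun x => \big[Num.max/0]_(i < m) \sum_(j < n | a j == i) X i j x)%R
     <= (2 * b + 10)%:E)%E.
Proof.
have c0_ge0 : 0 <= c0 by rewrite addr_ge0.
have light_ell_le1_ge0 x : 0 <= light_ell_le1 x by exact: sumr_ge0.
have excess_ge0 x : 0 <= excess x by do 2!apply: sumr_ge0 => ? _.
have heavy_total_ge0 x : 0 <= heavy_total x by exact: sumr_ge0.
have tail_ge0 x : 0 <= c0 + (excess x + heavy_total x) by rewrite !addr_ge0.
have excess_heavy_ge0 x : 0 <= excess x + heavy_total x by rewrite addr_ge0.
have mexcess_heavy := measurable_funD mexcess mheavy_total.
have mtail := measurable_funD (measurable_cst c0) mexcess_heavy.
have mmakespan : measurable_fun setT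
    (fun x => \big[Num.max/0]_(i < m) \sum_(j < n | a j == i) X i j x).
  by apply: measurable_bigmaxr => i; exact: measurable_sum_pred.
have makespan_ge0 x : 0 <= \big[Num.max/0]_(i < m) \sum_(j < n | a j == i) X i j x.
  exact: bigmax_ge_id.
apply: le_trans (le_expect P mmakespan (measurable_funD mlight_ell_le1 mtail)
  makespan_ge0 makespan_le) _.
rewrite expectD // (expectD P (fun=> c0) (fun x => excess x + heavy_total x)) //.
rewrite (expectD P excess heavy_total) // expect_cst.
apply: le_trans (leeD expect_light_ell_le1
  (leeD (lexx _) (leeD expect_excess expect_heavy_total))) _.
by rewrite -!EFinD lee_fin /c0; lra.
Qed.

End makespan.

Theorem mainTheorem7 (d : measure_display) (T : measurableType d) (R : realType)
  (P : probability T R) (m n : nat) (X : 'I_m -> 'I_n -> T -> R)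
  (a : 'I_n -> 'I_m) (ell : 'I_m -> nat) (b : R) :
  0 <= b ->
  (forall i j, measurable_fun setT (X i j)) ->
  (forall i j x, 0 <= X i j x) ->
  jobs_independent P X ->
  (forall i, (1 <= ell i <= m)%N) ->
  (forall l : nat, (1 <= l <= m)%N -> (#|[pred i : 'I_m | (ell i <= l)%N]| <= l)%N) ->
  (\sum_(i < m) \sum_(j < n | a j == i) expect P (truncH (X i j)) <= 2%:E)%E ->
  (forall i : 'I_m, \sum_(j < n | a j == i) beta P (ell i) (truncL (X i j)) <= b + 1) ->
  (expect P (fun x => (\big[Num.max/0]_(i < m) \sum_(j < n | a j == i) X i j x)%R)
     <= (4 * b + 10)%R%:E)%E.
Proof.
move=> b_ge0 mX X_ge0 indepX ell_itv ell_count sum_heavy_le2 sum_beta_le.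
have ell_le i : (ell i <= m)%N by case/andP: (ell_itv i).
apply: le_trans (expect_makespan_le b_ge0 mX X_ge0 indepX ell_le ell_count
  sum_heavy_le2 sum_beta_le) _.
by rewrite lee_fin; lra.
Qed.
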